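(* Fix a finite relational schema $\sigma$ and an integer $d\geq 2$, let $\mathbf{C}$ be a class of $\sigma$-databases of degree at most $d$, and let $\mathbf{P}\subseteq\mathbf{C}$ be a property. If $\mathbf{P}$ is uniformly testable on $\mathbf{C}$ in time $f(n)$ in the $\operatorname{BDRD}$ model, then $\mathbf{P}$ is also uniformly testable on $\mathbf{C}$ in time $f(n)$ in the $\operatorname{BDRD}_{+/-}$ model.
   Context: A $\sigma$-database $\mathcal{D}$ has a finite domain $D$ (identified with $[n]$) and relations $R^{\mathcal{D}}\subseteq D^{\operatorname{ar}(R)}$, $R\in\sigma$. The degree of an element is the number of tuples containing it; the degree of $\mathcal{D}$ is the maximum. A property is an isomorphism-closed class. $\operatorname{BDRD}$ model: for $\mathcal{D},\mathcal{D}'$ with the same number $n$ of elements, $\operatorname{dist}(\mathcal{D},\mathcal{D}')$ is the minimum number of tuple insertions/deletions in relations of $\mathcal{D}$ and $\mathcal{D}'$ making them isomorphic (databases of different sizes are at infinite distance); they are $\epsilon$-close if $\operatorname{dist}\leq\epsilon dn$, else $\epsilon$-far. $\operatorname{BDRD}_{+/-}$ model: $\operatorname{dist}_{+/-}(\mathcal{D},\mathcal{D}')$ is the minimum number of modifications (inserting an element, deleting an element together with all tuples containing it, inserting a tuple, deleting a tuple) making them isomorphic; $\epsilon$-close if $\operatorname{dist}_{+/-}\leq\epsilon d\min\{|D|,|D'|\}$, else $\epsilon$-far. In either model, $\mathcal{D}$ is $\epsilon$-far from $\mathbf{P}$ if it is $\epsilon$-far from every member of $\mathbf{P}$. Testing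 (same in both models except for the distance): a tester receives $n=|D|$ and may ask oracle queries $(R,i,j)$, answered in constant time by the $j$-th tuple of $R^{\mathcal{D}}$ containing the $i$-th element (or $\bot$). An $\epsilon$-tester for $\mathbf{P}$ on $\mathbf{C}$ is a probabilistic algorithm which on $\mathcal{D}\in\mathbf{C}$ accepts with probability $\geq2/3$ if $\mathcal{D}\in\mathbf{P}$ and rejects with probability $\geq2/3$ if $\mathcal{D}$ is $\epsilon$-far from $\mathbf{P}$. $\mathbf{P}$ is uniformly testable on $\mathbf{C}$ in time $f(n)$ if for every $\epsilon\in(0,1]$ there is an $\epsilon$-tester for $\mathbf{P}$ on $\mathbf{C}$, working for all $n$, with number of oracle queries bounded independently of $n$ and running time $f(n)$ on $n$-element inputs (RAM with uniform cost). *)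

From mathcomp Require Import all_boot.
From Stdlib Require Import Reals.

Set Implicit Arguments.
Unset Strict Implicit.
Unset Printing Implicit Defensive.

Record schema := Schema { rel_sym :> finType; arity : rel_sym -> nat }.

Definition database (s : schema) (n : nat) :=
  forall R : s, {set (arity R).-tuple 'I_n}.

Definition sdb (s : schema) := {n : nat & database s n}.
Definition mk_sdb (s : schema) (n : nat) (D : database s n) : sdb s :=
  existT (fun m => database s m) n D.

Definition deg_elem (s : schema) (n : nat) (D : database s n) (x : 'I_n) : nat :=
  \sum_(R : s) #|[set t in D R | x \in t]|.

Definition degree (s : schema) (n : nat) (D : database s n) : nat :=
  \max_(x : 'I_n) deg_elem D x.

Definition map_db (s : schema) (n m : nat) (g : 'I_n -> 'I_m) (D : database s n)
  : database s m :=
  fun R => [set map_tuple g t | t in D R].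

Definition iso (s : schema) (A B : sdb s) : Prop :=
  exists g : 'I_(projT1 A) -> 'I_(projT1 B),
    bijective g /\ forall R : s, map_db g (projT2 A) R = projT2 B R.

Definition iso_closed (s : schema) (P : forall n, database s n -> Prop) : Prop :=
  forall n m (D : database s n) (D' : database s m),
    iso (mk_sdb D) (mk_sdb D') -> P n D -> P m D'.

Definition edits (s : schema) (n : nat) (D D1 : database s n) : nat :=
  \sum_(R : s) #|(D R :\: D1 R) :|: (D1 R :\: D R)|.

Definition closeness (s : schema) :=
  R -> nat -> forall n, database s n -> forall m, database s m -> Prop.

(* BDRD: dist(D,D') <= eps d n, where dist is the minimum number of tuple
   insertions/deletions in D and D' making them isomorphic (infinite when
   the sizes differ, since then no isomorphism exists). *)
Definition close_bdrd (s : schema) : closeness s :=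
  fun eps d n D m D' =>
    exists (D1 : database s n) (D2 : database s m),
      iso (mk_sdb D1) (mk_sdb D2) /\
      (INR (edits D D1 + edits D' D2) <= eps * INR d * INR n)%R.

Definition ins_elem (s : schema) (n : nat) (D : database s n) : database s n.+1 :=
  map_db (widen_ord (leqnSn n)) D.

(* delete element x together with all tuples containing it *)
Definition del_elem (s : schema) (m : nat) (x : 'I_m.+1) (D : database s m.+1)
  : database s m :=
  fun R => [set t : (arity R).-tuple 'I_m | map_tuple (lift x) t \in D R].

Inductive pm_step (s : schema) : sdb s -> sdb s -> Prop :=
| PM_ins_elem n (D : database s n) : pm_step (mk_sdb D) (mk_sdb (ins_elem D))
| PM_del_elem m (x : 'I_m.+1) (D : database s m.+1) :
    pm_step (mk_sdb D) (mk_sdb (del_elem x D))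
| PM_tuple n (D D' : database s n) :
    edits D D' = 1 -> pm_step (mk_sdb D) (mk_sdb D').

Inductive pm_reach (s : schema) : nat -> sdb s -> sdb s -> Prop :=
| PM_refl A : pm_reach 0 A A
| PM_more k A B C : pm_step A B -> pm_reach k B C -> pm_reach k.+1 A C.

Definition close_pm (s : schema) : closeness s :=
  fun eps d n D m D' =>
    exists (k1 k2 : nat) (A1 B1 : sdb s),
      pm_reach k1 (mk_sdb D) A1 /\ pm_reach k2 (mk_sdb D') B1 /\ iso A1 B1 /\
      (INR (k1 + k2) <= eps * INR d * INR (minn n m))%R.

Inductive instr :=
| IConst (r c : nat)
| IAdd (r a b : nat)
| ISub (r a b : nat)              (* M[r] := M[a] - M[b] (truncated) *)
| ILoad (r a : nat)               (* M[r] := M[M[a]] *)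
| IStore (a r : nat)              (* M[M[a]] := M[r] *)
| IJz (r l : nat)
| ICoin (r : nat)
| IQuery (r rr ri rj : nat)       (* oracle query (M[rr], M[ri], M[rj]);
                                     M[r] := 0 if answer is bot, else
                                     M[r] := 1 and M[r+1..r+k] := the tuple *)
| IAccept
| IReject.

(* oracle: (relation index, element index, j) |-> tuple or bot *)
Definition oracle := nat -> nat -> nat -> option (seq nat).

(* O is an oracle for D: relation symbols are numbered by enum_rank,
   elements of [n] by 0..n-1, and for each R and element x the answers
   (R,x,0), (R,x,1), ... enumerate (in some order, without repetition)
   the tuples of R^D containing x, followed by bot. *)
Definition valid_oracle (s : schema) (n : nat) (D : database s n) (O : oracle) : Prop :=
  (forall k i j, (#|s| <= k) || (n <= i) -> O k i j = None) /\
  forall (R : s) (x : 'I_n),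
    exists L : seq ((arity R).-tuple 'I_n),
      uniq L /\ (forall t, (t \in L) = (t \in D R) && (x \in t)) /\
      forall j, O (enum_rank R) x j =
                omap (fun t : (arity R).-tuple 'I_n => [seq nat_of_ord y | y <- t])
                     (ohead (drop j L)).

Record config := Config { pc : nat; mem : nat -> nat; ncoin : nat; nq : nat }.

Definition upd (M : nat -> nat) (r v : nat) : nat -> nat :=
  fun x => if x == r then v else M x.

Definition write_answer (M : nat -> nat) (r : nat) (a : option (seq nat)) : nat -> nat :=
  match a with
  | None => upd M r 0
  | Some t => fun x => if x == r then 1
                       else if (r < x) && (x - r.+1 < size t) then nth 0 t (x - r.+1)
                       else M x
  end.

(* one step; inr b means the machine halted with output b (true = accept);
   running off the program counts as rejecting *)
Definition step (p : seq instr) (O : oracle) (b : nat -> bool) (c : config)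
  : config + bool :=
  let M := mem c in
  match nth IReject p (pc c) with
  | IConst r k => inl (Config (pc c).+1 (upd M r k) (ncoin c) (nq c))
  | IAdd r a b' => inl (Config (pc c).+1 (upd M r (M a + M b')) (ncoin c) (nq c))
  | ISub r a b' => inl (Config (pc c).+1 (upd M r (M a - M b')) (ncoin c) (nq c))
  | ILoad r a => inl (Config (pc c).+1 (upd M r (M (M a))) (ncoin c) (nq c))
  | IStore a r => inl (Config (pc c).+1 (upd M (M a) (M r)) (ncoin c) (nq c))
  | IJz r l => inl (Config (if M r == 0 then l else (pc c).+1) M (ncoin c) (nq c))
  | ICoin r => inl (Config (pc c).+1 (upd M r (b (ncoin c))) (ncoin c).+1 (nq c))
  | IQuery r rr ri rj =>
      inl (Config (pc c).+1 (write_answer M r (O (M rr) (M ri) (M rj)))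
                  (ncoin c) (nq c).+1)
  | IAccept => inr true
  | IReject => inr false
  end.

(* run for at most [fuel] steps; Some (output, number of oracle queries) if halted *)
Fixpoint run (fuel : nat) (p : seq instr) (O : oracle) (b : nat -> bool) (c : config)
  : option (bool * nat) :=
  match fuel with
  | 0 => None
  | k.+1 => match step p O b c with
            | inl c' => run k p O b c'
            | inr o => Some (o, nq c)
            end
  end.

Definition init (n : nat) : config := Config 0 (fun x => if x == 0 then n else 0) 0 0.

(* number of coin strings of length T leading to output o within T steps;
   if the machine always halts within T steps it uses at most T coins, so
   this over 2^T is the probability of output o. *)
Definition count_out (p : seq instr) (O : oracle) (n T : nat) (o : bool) : nat :=
  #|[set w : T.-tuple bool |
     if run T p O (fun i => nth false w i) (init n) is Some (o', _) then o' == o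
     else false]|.

Definition prob_out (p : seq instr) (O : oracle) (n T : nat) (o : bool) : R :=
  (INR (count_out p O n T o) / INR (2 ^ T))%R.

Definition far (s : schema) (close : closeness s) (eps : R) (d : nat)
  (P : forall n, database s n -> Prop) (n : nat) (D : database s n) : Prop :=
  forall m (D' : database s m), P m D' -> ~ close eps d n D m D'.

Definition uniformly_testable (s : schema) (close : closeness s) (d : nat)
  (C P : forall n, database s n -> Prop) (f : nat -> nat) : Prop :=
  forall eps : R, (0 < eps <= 1)%R ->
    exists (p : seq instr) (q c : nat),
      (forall n (D : database s n) (O : oracle), C n D -> valid_oracle D O ->
         forall b : nat -> bool, exists o k,
           run (c * f n + c) p O b (init n) = Some (o, k) /\ k <= q) /\
      (forall n (D : database s n) (O : oracle), C n D -> valid_oracle D O ->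
         (P n D -> (prob_out p O n (c * f n + c) true >= 2/3)%R) /\
         (far close eps d P D -> (prob_out p O n (c * f n + c) false >= 2/3)%R)).

(* Turning one database of size n into another by k tuple insertions and
   deletions is in particular a sequence of k modifications of the
   BDRD_{+/-} model, so dist_{+/-} <= dist; as min(|D|,|D'|) = n whenever
   the BDRD distance is finite, BDRD-closeness implies BDRD_{+/-}-closeness.
   Hence a database that is eps-far in the BDRD_{+/-} model is eps-far in
   the BDRD model, and every BDRD tester is, unchanged, a BDRD_{+/-} tester. *)
From mathcomp Require Import all_boot.
From Stdlib Require Import Reals FunctionalExtensionality.

Section TupleEdits.
Variables (s : schema) (n : nat).

Local Notation entry := {R : s & (arity R).-tuple 'I_n}.

Definition db_mem (D : database s n) (u : entry) : bool := tagged u \in D (tag u).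

Definition db_of (p : pred entry) : database s n :=
  fun R => [set t | p (Tagged (fun R => (arity R).-tuple 'I_n) t)].

Lemma db_mem_of (p : pred entry) (u : entry) : db_mem (db_of p) u = p u.
Proof. by case: u => R t; rewrite /db_mem inE. Qed.

Lemma db_mem_inj (D D1 : database s n) : db_mem D =1 db_mem D1 -> D = D1.
Proof.
move=> eqD; apply: functional_extensionality_dep => R; apply/setP => t.
exact: (eqD (Tagged (fun R => (arity R).-tuple 'I_n) t)).
Qed.

Definition db_diff (D D1 : database s n) : {set entry} :=
  [set u | db_mem D u != db_mem D1 u].

Lemma edits_card (D D1 : database s n) : edits D D1 = #|db_diff D D1|.
Proof.
rewrite /edits -sum1dep_card.
under eq_bigr => R _ do rewrite -sum1dep_card.
rewrite sig_big_dep /=.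
apply: eq_bigl => -[R t]; rewrite /db_mem !inE /=.
by case: (t \in D R); case: (t \in D1 R).
Qed.

Definition db_toggle (D D1 : database s n) (u0 : entry) : database s n :=
  db_of [pred u | if u == u0 then db_mem D1 u else db_mem D u].

Lemma db_diff_toggle_l (D D1 : database s n) (u0 : entry) :
  u0 \in db_diff D D1 -> db_diff D (db_toggle D D1 u0) = [set u0].
Proof.
rewrite inE => u0_diff; apply/setP => u; rewrite !inE /db_toggle db_mem_of /=.
by case: (eqVneq u u0) => [->|_]; rewrite ?eqxx.
Qed.

Lemma db_diff_toggle_r (D D1 : database s n) (u0 : entry) :
  db_diff (db_toggle D D1 u0) D1 = db_diff D D1 :\ u0.
Proof.
apply/setP => u; rewrite !inE /db_toggle db_mem_of /=.
by case: (eqVneq u u0) => [->|_]; rewrite ?eqxx.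
Qed.

Lemma pm_reach_edits (D D1 : database s n) :
  pm_reach (edits D D1) (mk_sdb D) (mk_sdb D1).
Proof.
move Ek: (edits D D1) => k; elim: k D Ek => [|k IHk] D.
  rewrite edits_card => /eqP; rewrite cards_eq0 => /eqP diff0.
  rewrite (@db_mem_inj D D1); first exact: PM_refl.
  by move=> u; have := in_set0 u; rewrite -diff0 inE => /negbFE/eqP.
rewrite edits_card => diffSk.
have [u0 u0_diff] : {u0 | u0 \in db_diff D D1}.
  by apply/sigW/set0Pn; rewrite -card_gt0 diffSk.
apply: (@PM_more _ _ _ (mk_sdb (db_toggle D D1 u0))).
  by apply: PM_tuple; rewrite edits_card db_diff_toggle_l // cards1.
apply: IHk; rewrite edits_card db_diff_toggle_r.
by move: diffSk; rewrite (cardsD1 u0) u0_diff => -[].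
Qed.

End TupleEdits.

Lemma close_bdrd_pm (s : schema) (eps : R) (d n : nat) (D : database s n)
    (m : nat) (D' : database s m) :
  close_bdrd eps d D D' -> close_pm eps d D D'.
Proof.
move=> [D1 [D2 [isoD12 le_edits]]].
have eq_nm : n = m.
  by case: isoD12 => g [/bij_eq_card + _]; rewrite !card_ord.
subst m; exists (edits D D1), (edits D' D2), (mk_sdb D1), (mk_sdb D2).
by rewrite minnn; do !split=> //; apply: pm_reach_edits.
Qed.

Section CoarserCloseness.
Variables (s : schema) (close close' : closeness s).
Hypothesis close_sub : forall eps d n (D : database s n) m (D' : database s m),
  close eps d n D m D' -> close' eps d n D m D'.

Lemma far_sub (eps : R) (d : nat) (P : forall n, database s n -> Prop)
    (n : nat) (D : database s n) :
  far close' eps d P D -> far close eps d P D.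
Proof. by move=> farD m D' PD' /close_sub; apply: farD. Qed.

Lemma uniformly_testable_sub (d : nat) (C P : forall n, database s n -> Prop)
    (f : nat -> nat) :
  uniformly_testable close d C P f -> uniformly_testable close' d C P f.
Proof.
move=> testable eps eps_range.
have [p [q [c [halts correct]]]] := testable eps eps_range.
exists p, q, c; split=> // n D O CD validO.
have [accepts rejects] := correct n D O CD validO.
by split=> // /far_sub; apply: rejects.
Qed.

End CoarserCloseness.

Theorem lemma4 (s : schema) (d : nat) (C P : forall n, database s n -> Prop)
  (f : nat -> nat) :
  2 <= d ->
  (forall n (D : database s n), C n D -> degree D <= d) ->
  (forall n (D : database s n), P n D -> C n D) ->
  iso_closed P ->
  uniformly_testable (@close_bdrd s) d C P f ->
  uniformly_testable (@close_pm s) d C P f.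
Proof.
move=> _ _ _ _; apply: uniformly_testable_sub.
exact: close_bdrd_pm.
Qed.
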